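(* Let $B\colon\mathbb{R}^n\times\mathbb{R}^n\to\mathbb{R}^n$ be a symmetric bilinear map. Then $\langle B(y,y),y\rangle_{\mathbb{R}^n}=0$ for all $y\in\mathbb{R}^n$ if and only if there exists a linear map $S\colon\mathbb{R}^n\to\mathfrak{so}(n)$ such that $B(y,y)=S(y)(y)$ for all $y\in\mathbb{R}^n$.
   Context: $\langle\cdot,\cdot\rangle_{\mathbb{R}^n}$ is the Euclidean inner product on $\mathbb{R}^n$, and $\mathfrak{so}(n)$ is the space of linear maps $q\colon\mathbb{R}^n\to\mathbb{R}^n$ that are skew-adjoint with respect to it. *)

(* Vectors of R^n are row vectors 'rV[R]_n, linear maps
   R^n -> R^n are matrices acting on the right: q(y) = y *m Q. *)
From HB Require Import structures.
From mathcomp Require Import all_boot all_order all_algebra.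
Set Implicit Arguments. Unset Strict Implicit. Unset Printing Implicit Defensive.
Import Order.TTheory GRing.Theory Num.Theory.
Local Open Scope ring_scope.

Definition dotR (R : realFieldType) (n : nat) (u v : 'rV[R]_n) : R :=
  \sum_(i < n) u 0 i * v 0 i.

(* Q (as the linear map y |-> y *m Q) is skew-adjoint w.r.t. dotR,
   i.e. Q represents an element of so(n). *)
Definition skew_adjoint (R : realFieldType) (n : nat) (Q : 'M[R]_n) : Prop :=
  forall x y : 'rV[R]_n, dotR (x *m Q) y = - dotR x (y *m Q).

Definition bilinear_map (R : realFieldType) (n : nat)
  (B : 'rV[R]_n -> 'rV[R]_n -> 'rV[R]_n) : Prop :=
  (forall (a : R) x y z, B (a *: x + y) z = a *: B x z + B y z) /\
  (forall (a : R) x y z, B x (a *: y + z) = a *: B x y + B x z).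

Definition symmetric_map (R : realFieldType) (n : nat)
  (B : 'rV[R]_n -> 'rV[R]_n -> 'rV[R]_n) : Prop :=
  forall x y, B x y = B y x.

Definition linear_map (R : realFieldType) (n : nat) (S : 'rV[R]_n -> 'M[R]_n) : Prop :=
  forall (a : R) x y, S (a *: x + y) = a *: S x + S y.

From HB Require Import structures.
From mathcomp Require Import all_boot all_order all_algebra.
From mathcomp Require Import ring lra.
Import Order.TTheory GRing.Theory Num.Theory.
Local Open Scope ring_scope.
Set Implicit Arguments.

(* Polarizing the cubic form <B(y,y), y> shows that it vanishes identically
   iff <B(x,x), z> = -2 <B(x,z), x> for all x, z.  Writing B(y, -) as the
   matrix M_y, the skew matrix S(y) = 2/3 (M_y - M_y^T) then satisfies
   <y S(y), z> = 2/3 (<B(y,y), z> - <B(y,z), y>) = <B(y,y), z>.  The converse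
   is immediate: <y S(y), y> = -<y, y S(y)> forces <y S(y), y> = 0. *)

Section InnerProduct.
Variables (R : realFieldType) (n : nat).
Implicit Types (u v z : 'rV[R]_n).

Lemma dotRC u v : dotR u v = dotR v u.
Proof. by apply: eq_bigr => i _; rewrite mulrC. Qed.

Lemma dotR_mulmx u v : dotR u v = (u *m v^T) 0 0.
Proof. by rewrite mxE; apply: eq_bigr => i _; rewrite mxE. Qed.

Lemma dotRDl u v z : dotR (u + v) z = dotR u z + dotR v z.
Proof. by rewrite !dotR_mulmx mulmxDl mxE. Qed.

Lemma dotRNl u z : dotR (- u) z = - dotR u z.
Proof. by rewrite !dotR_mulmx mulNmx mxE. Qed.

Lemma dotRZl a u z : dotR (a *: u) z = a * dotR u z.
Proof. by rewrite !dotR_mulmx -scalemxAl mxE. Qed.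

Lemma dotRDr u v z : dotR z (u + v) = dotR z u + dotR z v.
Proof. by rewrite !(dotRC z) dotRDl. Qed.

Lemma dotRNr u z : dotR z (- u) = - dotR z u.
Proof. by rewrite !(dotRC z) dotRNl. Qed.

Lemma dotR_mulmx_tr u v (A : 'M[R]_n) : dotR (u *m A) v = dotR u (v *m A^T).
Proof. by rewrite !dotR_mulmx trmx_mul trmxK mulmxA. Qed.

Lemma dotR_delta u (j : 'I_n) : dotR u (delta_mx 0 j) = u 0 j.
Proof.
rewrite /dotR (bigD1 j) //= big1 ?addr0; first by rewrite mxE !eqxx mulr1.
by move=> i /negbTE neq_ij; rewrite mxE neq_ij andbF mulr0.
Qed.

Lemma dotR_inj u v : (forall z, dotR u z = dotR v z) -> u = v.
Proof. by move=> eq_uv; apply/rowP => j; rewrite -!(dotR_delta _ j) eq_uv. Qed.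

Lemma skew_adjoint_trmx (A : 'M[R]_n) : A^T = - A -> skew_adjoint A.
Proof. by move=> skewA u v; rewrite dotR_mulmx_tr skewA mulmxN dotRNr. Qed.

End InnerProduct.

Section Bilinear.
Context {R : realFieldType} {n : nat}.
Variable B : 'rV[R]_n -> 'rV[R]_n -> 'rV[R]_n.
Hypothesis hB : bilinear_map B.
Implicit Types (x y z : 'rV[R]_n).

Lemma B0l y : B 0 y = 0.
Proof.
apply: (addrI (B 0 y)); rewrite addr0.
by have := (proj1 hB) 1 0 0 y; rewrite !scale1r addr0.
Qed.

Lemma B0r y : B y 0 = 0.
Proof.
apply: (addrI (B y 0)); rewrite addr0.
by have := (proj2 hB) 1 y 0 0; rewrite !scale1r addr0.
Qed.

Lemma BDl x y z : B (x + y) z = B x z + B y z.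
Proof. by rewrite -{1}(scale1r x) (proj1 hB) scale1r. Qed.

Lemma BDr x y z : B z (x + y) = B z x + B z y.
Proof. by rewrite -{1}(scale1r x) (proj2 hB) scale1r. Qed.

Lemma BZr a x z : B z (a *: x) = a *: B z x.
Proof. by rewrite -(addr0 (a *: x)) (proj2 hB) B0r addr0. Qed.

Lemma BNl x z : B (- x) z = - B x z.
Proof. by rewrite -scaleN1r -(addr0 (_ *: x)) (proj1 hB) B0l addr0 scaleN1r. Qed.

Lemma BNr x z : B z (- x) = - B z x.
Proof. by rewrite -scaleN1r BZr scaleN1r. Qed.

Definition bilin_mx y : 'M[R]_n := \matrix_i B y (delta_mx 0 i).

Lemma mul_bilin_mx y x : x *m bilin_mx y = B y x.
Proof.
rewrite mulmx_sum_row {2}(row_sum_delta x).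
apply: (big_ind2 (fun w u => w = B y u)) => //.
- by rewrite B0r.
- by move=> ? ? ? ? -> ->; rewrite BDr.
- by move=> i _; rewrite BZr rowK.
Qed.

Lemma bilin_mx_linear a x y :
  bilin_mx (a *: x + y) = a *: bilin_mx x + bilin_mx y.
Proof. by apply/matrixP => i j; rewrite !mxE (proj1 hB) !mxE. Qed.

Hypothesis hsym : symmetric_map B.

Lemma cubic_form_polar :
  (forall y, dotR (B y y) y = 0) ->
  forall x z, dotR (B x x) z + 2 * dotR (B x z) x = 0.
Proof.
move=> cubic0 x z; have hsum := cubic0 (x + z); have hdiff := cubic0 (x - z).
have hz := cubic0 z.
rewrite !(BDl, BDr, BNl, BNr, dotRDl, dotRDr, dotRNl, dotRNr) (hsym z x) in hsum hdiff.
lra.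
Qed.

Definition skew_part y : 'M[R]_n := (2 / 3) *: (bilin_mx y - (bilin_mx y)^T).

Lemma skew_part_linear : linear_map skew_part.
Proof.
move=> a x y; rewrite /skew_part bilin_mx_linear.
by apply/matrixP => i j; rewrite !mxE; ring.
Qed.

Lemma skew_part_skew_adjoint y : skew_adjoint (skew_part y).
Proof.
by apply: skew_adjoint_trmx; rewrite /skew_part linearZ linearB /= trmxK -scalerN opprB.
Qed.

Lemma dotR_mul_skew_part y x z :
  dotR (x *m skew_part y) z = 2 / 3 * (dotR (B y x) z - dotR (B y z) x).
Proof.
rewrite -scalemxAr mulmxBr dotRZl dotRDl dotRNl mul_bilin_mx.
by rewrite dotR_mulmx_tr trmxK mul_bilin_mx [dotR x _]dotRC.
Qed.

End Bilinear.

Theorem lemma6 (R : realFieldType) (n : nat)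
  (B : 'rV[R]_n -> 'rV[R]_n -> 'rV[R]_n)
  (hB : bilinear_map B) (hsym : symmetric_map B) :
  (forall y : 'rV[R]_n, dotR (B y y) y = 0) <->
  (exists S : 'rV[R]_n -> 'M[R]_n,
     linear_map S /\ (forall y, skew_adjoint (S y)) /\
     (forall y : 'rV[R]_n, B y y = y *m S y)).
Proof.
split.
- move=> cubic0; exists (skew_part B); split; last split.
  + exact: skew_part_linear.
  + exact: skew_part_skew_adjoint.
  + move=> y; apply: dotR_inj => z; rewrite (dotR_mul_skew_part hB).
    have := cubic_form_polar hB hsym cubic0 y z; lra.
- move=> [S [_ [skewS BS]]] y.
  by have := skewS y y y; rewrite -BS dotRC; lra.
Qed.
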